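(* For every instance, $H^{PW''}\le \tfrac{32000}{16947}H^*$ (note $\tfrac{32000}{16947}\approx 1.888$). That is, the approximation ratio of algorithm PW'' never exceeds $\tfrac{32000}{16947}$.
   Context: An instance consists of an integer $n\ge 1$ and growth rates $1=h(1)\ge h(2)\ge\cdots\ge h(n)>0$ of bamboos $b_1,\dots,b_n$. Bamboo Garden Trimming (discrete version): - All heights are $0$ initially. - On each day $t=1,2,\dots$ every bamboo $b_j$ grows by $h(j)$. - At the end of each day the gardener cuts exactly one bamboo $\sigma(t)\in\{1,\dots,n\}$ back to height $0$. The height of a schedule $\sigma:\mathbb{N}\to\{1,\dots,n\}$ is the supremum, over all days $t$ and all $j$, of the height of $b_j$ at the end of day $t$ just before the cut. $H^*$ denotes the infimum of this height over all schedules. Value of algorithm PW'': - Split $\{1,\dots,n\}$ into four sets: - $S_1=\{j: \tfrac23<h(j)\le 1\}$; - $S_2=\{j:\tfrac12<h(j)\le\tfrac23\}$; - $S_3=\{j: h(j)\le\tfrac12 \text{ and } \tfrac23 2^{-k}<h(j)\le 2^{-k}\text{ for some integer }k\ge1\}$; - $S_4=\{j: h(j)\le\tfrac12\text{ and } 2^{-(k+1)}<h(j)\le \tfrac23 2^{-k}\text{ for some integer }k\ge 1\}$. - Modified growths: $h''(j)=2^{-k}$ for $j\in S_3$ and $h''(j)=\tfrac23 2^{-k}$ for $j\in S_4$, with $k$ as in the definition of the set. - Let $\pi_1=|S_1|$, $sh_3=\sum_{j\in S_3}h''(j)$, $sh_4=\sum_{j\in S_4}h''(j)$, $\pi_3=\lfloor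 sh_3\rfloor$, $\pi_4=\lfloor sh_4\rfloor$, $f_3=sh_3-\pi_3$, $f_4=sh_4-\pi_4$. - Option (a): $\pi_R(a)=\lceil f_3+f_4\rceil$ and $z(a)=\pi_1+|S_2|+\pi_3+\pi_4+\pi_R(a)$. - Option (b): if $S_2=\emptyset$ put $z(b)=+\infty$. Otherwise let $h^*=\max_{j\in S_2}h(j)$ and $f_2=\tfrac12$ if $|S_2|$ is odd, $f_2=0$ if $|S_2|$ is even. Then $\pi_R(b)=\lceil f_2+f_3+f_4\rceil$ and $z(b)=2h^*\,(\pi_1+\lfloor |S_2|/2\rfloor+\pi_3+\pi_4+\pi_R(b))$. - The value returned by algorithm PW'' is $H^{PW''}=\min\{z(a),z(b)\}$. The paper takes this as the maximum height of the periodic pinwheel trimming schedule that it builds from these partitions. *)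

From Stdlib Require Import Reals Lra Lia List Arith ZArith.
Open Scope R_scope.

(** Bamboos are indexed 1..n, days are 1,2,...; a schedule is sigma : nat -> nat
    (value on day t = index of the bamboo cut at end of day t; sigma 0 unused). *)

Fixpoint height_after (h : nat -> R) (sigma : nat -> nat) (j : nat) (t : nat) : R :=
  match t with
  | O => 0
  | S t' => if Nat.eqb (sigma (S t')) j then 0
            else height_after h sigma j t' + h j
  end.

(** Height of bamboo j at the end of day t >= 1, just before the cut. *)
Definition height_before (h : nat -> R) (sigma : nat -> nat) (j : nat) (t : nat) : R :=
  height_after h sigma j (pred t) + h j.

(** Floor and ceiling (Int_part x = up x - 1 is the floor of x). *)
Definition floorR (x : R) : Z := Int_part x.
Definition ceilR (x : R) : Z := (- Int_part (- x))%Z.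

(** For 0 < x <= 1/2: the integer k >= 1 with 2^{-(k+1)} < x <= 2^{-k},
    i.e. k = floor(-log2 x). *)
Definition kexp (x : R) : nat := Z.to_nat (Int_part (- ln x / ln 2)).
Definition pow2inv (k : nat) : R := / (2 ^ k).

Definition ltb (x y : R) : bool := if Rlt_dec x y then true else false.
Definition leb (x y : R) : bool := if Rle_dec x y then true else false.

Definition inS1 (x : R) : bool := ltb (2/3) x && leb x 1.
Definition inS2 (x : R) : bool := ltb (1/2) x && leb x (2/3).
Definition inS3 (x : R) : bool :=
  leb x (1/2) && ltb (2/3 * pow2inv (kexp x)) x && leb x (pow2inv (kexp x)).
Definition inS4 (x : R) : bool :=
  leb x (1/2) && ltb (pow2inv (S (kexp x))) x && leb x (2/3 * pow2inv (kexp x)).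

(** Modified growth h'' for S3 / S4 members. *)
Definition h3 (x : R) : R := pow2inv (kexp x).
Definition h4 (x : R) : R := 2/3 * pow2inv (kexp x).

Definition idx (n : nat) : list nat := seq 1 n.
Definition S1 (n : nat) (h : nat -> R) := filter (fun j => inS1 (h j)) (idx n).
Definition S2 (n : nat) (h : nat -> R) := filter (fun j => inS2 (h j)) (idx n).
Definition S3 (n : nat) (h : nat -> R) := filter (fun j => inS3 (h j)) (idx n).
Definition S4 (n : nat) (h : nat -> R) := filter (fun j => inS4 (h j)) (idx n).

Definition sumR (l : list R) : R := fold_right Rplus 0 l.

Definition sh3 n h := sumR (map (fun j => h3 (h j)) (S3 n h)).
Definition sh4 n h := sumR (map (fun j => h4 (h j)) (S4 n h)).
Definition pi1 n h : R := INR (length (S1 n h)).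
Definition pi3 n h : R := IZR (floorR (sh3 n h)).
Definition pi4 n h : R := IZR (floorR (sh4 n h)).
Definition f3 n h : R := sh3 n h - pi3 n h.
Definition f4 n h : R := sh4 n h - pi4 n h.

Definition z_a n h : R :=
  pi1 n h + INR (length (S2 n h)) + pi3 n h + pi4 n h
  + IZR (ceilR (f3 n h + f4 n h)).

(** Option (b), only used when S2 is nonempty. *)
Definition hstar n h : R := fold_right Rmax 0 (map h (S2 n h)).
Definition f2 n h : R := if Nat.odd (length (S2 n h)) then 1/2 else 0.
Definition z_b n h : R :=
  2 * hstar n h *
  (pi1 n h + INR (Nat.div (length (S2 n h)) 2) + pi3 n h + pi4 n h
   + IZR (ceilR (f2 n h + f3 n h + f4 n h))).

(** H^{PW''} = min(z(a), z(b)), with z(b) = +infinity when S2 is empty. *)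
Definition H_PW (n : nat) (h : nat -> R) : R :=
  match S2 n h with
  | nil => z_a n h
  | _ :: _ => Rmin (z_a n h) (z_b n h)
  end.

Definition height_bounded_by (n : nat) (h : nat -> R) (sigma : nat -> nat) (B : R) : Prop :=
  forall t j, (1 <= t)%nat -> (1 <= j <= n)%nat -> height_before h sigma j t <= B.

(* Two lower bounds hold for every height bound B of a schedule when n >= 2: B >= 2 h(1) = 2,
   and B >= sum_j h(j) (a day's cut removes at most B, while the garden grows by sum_j h(j)).
   On the other side, z(a) and z(b) are bounded linearly in |S1|, |S2| and sh3 + sh4; since
   h'' <= 3/2 h on S3 and S4, h > 2/3 on S1 and h(1) = 1, the sum of the growth rates
   dominates 2/3 |S1| + 1/3 + h* + (|S2| - 1)/2 + 2/3 (sh3 + sh4), and the ratio bound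
   reduces to a polynomial inequality in these quantities. *)

From Pilot Require Import Defs.
From Stdlib Require Import Reals List Arith ZArith Lra Lia Psatz.
Open Scope R_scope.

Section SumR.

Implicit Types (f g : nat -> R) (l : list nat).

Lemma sumR_map_ext_in f g l :
  (forall x, In x l -> f x = g x) -> sumR (map f l) = sumR (map g l).
Proof. induction l as [|a l IH]; simpl; intros H; [lra|]. rewrite H, IH; auto. Qed.

Lemma sumR_map_add f g l :
  sumR (map (fun j => f j + g j) l) = sumR (map f l) + sumR (map g l).
Proof. induction l as [|a l IH]; simpl; [lra|]. rewrite IH; lra. Qed.

Lemma sumR_map_sub f g l :
  sumR (map (fun j => f j - g j) l) = sumR (map f l) - sumR (map g l).
Proof. induction l as [|a l IH]; simpl; [lra|]. rewrite IH; lra. Qed.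

Lemma sumR_map_scal (c : R) f l :
  sumR (map (fun j => c * f j) l) = c * sumR (map f l).
Proof. induction l as [|a l IH]; simpl; [lra|]. rewrite IH; lra. Qed.

Lemma sumR_map_const (c : R) l : sumR (map (fun _ => c) l) = c * INR (length l).
Proof.
  induction l as [|a l IH]; cbn [map sumR fold_right length]; [simpl; lra|].
  fold (sumR (map (fun _ => c) l)). rewrite IH, S_INR. lra.
Qed.

Lemma sumR_map_le f g l :
  (forall x, In x l -> f x <= g x) -> sumR (map f l) <= sumR (map g l).
Proof.
  induction l as [|a l IH]; simpl; intros H; [lra|].
  assert (f a <= g a) by auto. assert (sumR (map f l) <= sumR (map g l)) by auto. lra.
Qed.

Lemma sumR_map_nonneg f l : (forall x, In x l -> 0 <= f x) -> 0 <= sumR (map f l).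
Proof.
  intros H. rewrite <- (Rmult_0_l (INR (length l))), <- sumR_map_const.
  now apply sumR_map_le.
Qed.

Lemma sumR_map_ge_elem f l k :
  (forall x, In x l -> 0 <= f x) -> In k l -> f k <= sumR (map f l).
Proof.
  induction l as [|a l IH]; simpl; intros H Hk; [tauto|].
  assert (0 <= f a) by auto.
  assert (0 <= sumR (map f l)) by (apply sumR_map_nonneg; auto).
  destruct Hk as [<-|Hk]; [lra|].
  assert (f k <= sumR (map f l)) by auto. lra.
Qed.

Lemma sumR_map_filter (p : nat -> bool) f l :
  sumR (map f (filter p l)) = sumR (map (fun j => if p j then f j else 0) l).
Proof.
  induction l as [|a l IH]; simpl; [lra|]. destruct (p a); simpl; rewrite IH; lra.
Qed.

Lemma sumR_map_select f l k :
  NoDup l -> In k l -> sumR (map (fun j => if Nat.eqb k j then f j else 0) l) = f k.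
Proof.
  induction l as [|a l IH]; simpl; intros Hd Hk; [tauto|].
  inversion Hd as [|? ? Ha Hl]; subst.
  destruct Hk as [->|Hk].
  - rewrite Nat.eqb_refl, (sumR_map_ext_in _ (fun _ => 0)), sumR_map_const; [lra|].
    intros x Hx. destruct (Nat.eqb_spec k x); [subst; contradiction | reflexivity].
  - destruct (Nat.eqb_spec k a); [subst; contradiction|]. rewrite IH; auto; lra.
Qed.

End SumR.

Lemma in_idx n j : In j (idx n) <-> (1 <= j <= n)%nat.
Proof. unfold idx. rewrite in_seq. lia. Qed.

Section ScheduleLowerBounds.

Variables (n : nat) (h : nat -> R) (sigma : nat -> nat) (B : R).
Hypothesis Hsigma : forall t, (1 <= t)%nat -> (1 <= sigma t <= n)%nat.
Hypothesis HB : height_bounded_by n h sigma B.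

Lemma height_after_nonneg j t : 0 <= h j -> 0 <= height_after h sigma j t.
Proof. intros H. induction t; simpl; [lra|]. destruct (Nat.eqb _ _); lra. Qed.

Definition total_height (t : nat) : R :=
  sumR (map (fun j => height_after h sigma j t) (idx n)).

Lemma total_height_S t :
  total_height (S t) =
  total_height t + sumR (map h (idx n)) - height_before h sigma (sigma (S t)) (S t).
Proof.
  unfold total_height.
  rewrite (sumR_map_ext_in _ (fun j => (height_after h sigma j t + h j) -
     (if Nat.eqb (sigma (S t)) j then height_before h sigma j (S t) else 0))).
  - rewrite sumR_map_sub, sumR_map_add, sumR_map_select;
      [lra | apply seq_NoDup | apply in_idx, Hsigma; lia].
  - intros j _. unfold height_before. simpl. destruct (Nat.eqb _ _); lra.
Qed.

Lemma sum_rates_le_height_bound : 0 <= B -> sumR (map h (idx n)) <= B.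
Proof.
  intros HB0. set (s := sumR (map h (idx n))).
  assert (Hlow : forall t, INR t * (s - B) <= total_height t).
  { induction t as [|t IH].
    - unfold total_height. simpl height_after. rewrite sumR_map_const. simpl. lra.
    - rewrite total_height_S, S_INR.
      assert (height_before h sigma (sigma (S t)) (S t) <= B) by (apply HB, Hsigma; lia).
      fold s. lra. }
  assert (Hup : forall t, total_height t <= B * INR n).
  { intros t. unfold total_height.
    replace (INR n) with (INR (length (idx n))) by (unfold idx; rewrite length_seq; reflexivity).
    rewrite <- sumR_map_const. apply sumR_map_le.
    intros j Hj. apply in_idx in Hj. destruct t as [|t]; simpl; [lra|].
    destruct (Nat.eqb _ _); [lra|]. apply (HB (S t)); lia. }
  destruct (Rle_dec s B) as [|Hc]; [assumption|].
  destruct (INR_archimed (s - B) (B * INR n)) as [N HN]; [lra|].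
  specialize (Hlow N). specialize (Hup N). lra.
Qed.

(* If bamboo i ever stays uncut, it reaches 2 h i; so either B >= 2 h i, or i is cut every
   day and bamboo j grows forever. *)
Lemma height_bound_ge_twice_rate i j :
  (1 <= i <= n)%nat -> (1 <= j <= n)%nat -> i <> j -> 0 <= h i -> 0 < h j ->
  2 * h i <= B.
Proof.
  intros Hi Hj Hij Hi0 Hj0.
  destruct (Rle_dec (2 * h i) B) as [|Hc]; [assumption|exfalso].
  assert (Hcut : forall t, (1 <= t)%nat -> sigma t = i).
  { intros [|t] Ht; [lia|].
    destruct (Nat.eq_dec (sigma (S t)) i) as [|Hne]; [assumption|exfalso].
    assert (Hle : height_before h sigma i (S (S t)) <= B) by (apply HB; lia).
    unfold height_before in Hle. simpl in Hle.
    apply Nat.eqb_neq in Hne. rewrite Hne in Hle.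
    pose proof (height_after_nonneg i t Hi0). lra. }
  assert (Hgrow : forall t, height_after h sigma j t = INR t * h j).
  { induction t as [|t IH]; simpl height_after; [simpl; lra|].
    rewrite Hcut by lia. apply Nat.eqb_neq in Hij. rewrite Hij, IH, S_INR. lra. }
  destruct (INR_archimed (h j) B) as [N HN]; [lra|].
  assert (Hle : height_before h sigma j (S N) <= B) by (apply HB; lia).
  unfold height_before in Hle. simpl pred in Hle. rewrite Hgrow in Hle. lra.
Qed.

End ScheduleLowerBounds.

Ltac decide_thresholds := unfold Defs.ltb, Defs.leb in *; repeat match goal with
  | H : context [Rlt_dec ?a ?b] |- _ => destruct (Rlt_dec a b)
  | H : context [Rle_dec ?a ?b] |- _ => destruct (Rle_dec a b)
  | |- context [Rlt_dec ?a ?b] => destruct (Rlt_dec a b)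
  | |- context [Rle_dec ?a ?b] => destruct (Rle_dec a b)
  end; simpl in *; try discriminate; try lra.

Lemma pow2inv_pos k : 0 < pow2inv k.
Proof. unfold pow2inv. apply Rinv_0_lt_compat, pow_lt. lra. Qed.

Lemma pow2inv_S k : pow2inv (S k) = pow2inv k / 2.
Proof. unfold pow2inv. simpl. rewrite Rinv_mult. unfold Rdiv. lra. Qed.

Lemma class_indicators_le x : 0 <= x ->
  (if inS1 x then x else 0) + (if inS2 x then x else 0) +
  (if inS3 x then x else 0) + (if inS4 x then x else 0) <= x.
Proof.
  intros Hx. unfold inS1, inS2, inS3, inS4. pose proof (pow2inv_pos (kexp x)).
  rewrite pow2inv_S. set (p := pow2inv (kexp x)) in *. decide_thresholds.
Qed.

Lemma inS1_gt x : inS1 x = true -> 2/3 < x.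
Proof. unfold inS1. decide_thresholds. Qed.

Lemma inS2_bounds x : inS2 x = true -> 1/2 < x <= 2/3.
Proof. unfold inS2. decide_thresholds. Qed.

Lemma inS3_h3_bounds x : inS3 x = true -> 0 <= h3 x <= 3/2 * x.
Proof.
  unfold inS3, h3. pose proof (pow2inv_pos (kexp x)).
  set (p := pow2inv (kexp x)) in *. decide_thresholds.
Qed.

Lemma inS4_h4_bounds x : inS4 x = true -> 0 <= h4 x <= 3/2 * x.
Proof.
  unfold inS4, h4. rewrite pow2inv_S. pose proof (pow2inv_pos (kexp x)).
  set (p := pow2inv (kexp x)) in *. decide_thresholds.
Qed.

Lemma Rmax_list_bounds (l : list R) : l <> nil -> (forall x, In x l -> 1/2 < x <= 2/3) ->
  1/2 < fold_right Rmax 0 l <= 2/3 /\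
  fold_right Rmax 0 l + (INR (length l) - 1) / 2 <= sumR l.
Proof.
  induction l as [|x [|y l] IH]; intros Hne H; [congruence| |].
  - assert (1/2 < x <= 2/3) by (apply H; simpl; auto).
    simpl. unfold Rmax. destruct (Rle_dec x 0); simpl; lra.
  - assert (Hx : 1/2 < x <= 2/3) by (apply H; simpl; auto).
    destruct IH as [HM Hsum]; [discriminate | intros; apply H; simpl in *; tauto|].
    change (length (x :: y :: l)) with (S (length (y :: l))). rewrite S_INR.
    change (sumR (x :: y :: l)) with (x + sumR (y :: l)). simpl fold_right in *.
    set (M := Rmax y (fold_right Rmax 0 l)) in *.
    destruct (Rle_dec x M); [rewrite Rmax_right | rewrite Rmax_left]; lra.
Qed.

Section Partition.

Variables (n : nat) (h : nat -> R).

Lemma class_sums_le : (forall j, (1 <= j <= n)%nat -> 0 <= h j) ->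
  sumR (map h (S1 n h)) + sumR (map h (S2 n h)) + sumR (map h (S3 n h))
  + sumR (map h (S4 n h)) <= sumR (map h (idx n)).
Proof.
  intros Hpos. unfold S1, S2, S3, S4. rewrite !sumR_map_filter, <- !sumR_map_add.
  apply sumR_map_le. intros j Hj. apply class_indicators_le, Hpos, in_idx, Hj.
Qed.

Lemma sh3_bounds : 0 <= sh3 n h <= 3/2 * sumR (map h (S3 n h)).
Proof.
  unfold sh3. rewrite <- sumR_map_scal.
  split; [apply sumR_map_nonneg | apply sumR_map_le];
    intros j Hj; apply filter_In in Hj; apply inS3_h3_bounds, Hj.
Qed.

Lemma sh4_bounds : 0 <= sh4 n h <= 3/2 * sumR (map h (S4 n h)).
Proof.
  unfold sh4. rewrite <- sumR_map_scal.
  split; [apply sumR_map_nonneg | apply sumR_map_le];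
    intros j Hj; apply filter_In in Hj; apply inS4_h4_bounds, Hj.
Qed.

Hypotheses (Hn : (1 <= n)%nat) (H1 : h 1%nat = 1).

Lemma in_S1_first : In 1%nat (S1 n h).
Proof.
  unfold S1. apply filter_In. split; [apply in_idx; lia|].
  rewrite H1. unfold inS1. decide_thresholds.
Qed.

Lemma pi1_ge1 : 1 <= pi1 n h.
Proof.
  unfold pi1. pose proof in_S1_first as Hin.
  destruct (S1 n h) as [|a l]; [contradiction|]. simpl length. rewrite S_INR.
  pose proof (pos_INR (length l)). lra.
Qed.

Lemma S1_sum_lower : 2/3 * pi1 n h + 1/3 <= sumR (map h (S1 n h)).
Proof.
  unfold pi1.
  assert (Hge : h 1%nat - 2/3 <= sumR (map (fun j => h j - 2/3) (S1 n h))).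
  { apply (sumR_map_ge_elem (fun j => h j - 2/3)); [|apply in_S1_first].
    intros j Hj. apply filter_In in Hj as [_ Hj]. apply inS1_gt in Hj. lra. }
  rewrite sumR_map_sub, sumR_map_const in Hge. lra.
Qed.

End Partition.

Lemma ceilR_lt x : IZR (ceilR x) < x + 1.
Proof. unfold ceilR. destruct (base_Int_part (- x)). rewrite opp_IZR. lra. Qed.

Lemma INR_div2_add_odd_half s : INR (Nat.div s 2) + (if Nat.odd s then 1/2 else 0) = INR s / 2.
Proof.
  pose proof (Nat.div2_odd s) as E. rewrite Nat.div2_div in E.
  destruct (Nat.odd s); rewrite E at 2; rewrite plus_INR, mult_INR; simpl; lra.
Qed.

Section AlgorithmValue.

Variables (n : nat) (h : nat -> R).

Lemma z_a_lt : z_a n h < pi1 n h + INR (length (S2 n h)) + (sh3 n h + sh4 n h) + 1.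
Proof. unfold z_a. pose proof (ceilR_lt (f3 n h + f4 n h)). unfold f3, f4 in *. lra. Qed.

Lemma z_b_lt : 0 < hstar n h ->
  z_b n h < 2 * hstar n h * (pi1 n h + INR (length (S2 n h)) / 2 + (sh3 n h + sh4 n h) + 1).
Proof.
  intros Hh. unfold z_b. apply Rmult_lt_compat_l; [lra|].
  pose proof (ceilR_lt (f2 n h + f3 n h + f4 n h)).
  pose proof (INR_div2_add_odd_half (length (S2 n h))).
  unfold f2, f3, f4 in *. lra.
Qed.

Lemma hstar_bounds : S2 n h <> nil ->
  1/2 < hstar n h <= 2/3 /\
  hstar n h + (INR (length (S2 n h)) - 1) / 2 <= sumR (map h (S2 n h)).
Proof.
  intros Hne. unfold hstar. rewrite <- (length_map h).
  apply Rmax_list_bounds.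
  - destruct (S2 n h); [contradiction | discriminate].
  - intros x Hx. apply in_map_iff in Hx as [j [<- Hj]].
    apply filter_In in Hj. apply inS2_bounds, Hj.
Qed.

Lemma H_PW_cases :
  (S2 n h = nil /\ H_PW n h = z_a n h) \/
  (S2 n h <> nil /\ H_PW n h = Rmin (z_a n h) (z_b n h)).
Proof. unfold H_PW. destruct (S2 n h); [left | right]; split; easy. Qed.

End AlgorithmValue.

Lemma Int_part_0 : Int_part 0 = 0%Z.
Proof. exact (Int_part_INR 0). Qed.

Lemma H_PW_single (h : nat -> R) : h 1%nat = 1 -> H_PW 1 h = 1.
Proof.
  intros H1.
  assert (E1 : S1 1 h = (1%nat :: nil))
    by (unfold S1, idx; simpl; rewrite H1; unfold inS1; decide_thresholds; reflexivity).
  assert (E2 : S2 1 h = nil)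
    by (unfold S2, idx; simpl; rewrite H1; unfold inS2; decide_thresholds; reflexivity).
  assert (E3 : S3 1 h = nil)
    by (unfold S3, idx; simpl; rewrite H1; unfold inS3; decide_thresholds; reflexivity).
  assert (E4 : S4 1 h = nil)
    by (unfold S4, idx; simpl; rewrite H1; unfold inS4; decide_thresholds; reflexivity).
  unfold H_PW, z_a, f3, f4, pi1, pi3, pi4, sh3, sh4, floorR, ceilR.
  rewrite E1, E2, E3, E4. simpl. rewrite Int_part_0.
  replace (- (0 - IZR 0 + (0 - IZR 0))) with 0 by lra. rewrite Int_part_0. simpl. lra.
Qed.

(* The case split at h* = 3/5 is what lets nra find the two certificates. *)
Lemma Rmin_le_ratio (s1 s2 X hs B Za Zb : R) :
  1 <= s1 -> 1 <= s2 -> 0 <= X -> 1/2 < hs <= 2/3 -> 2 <= B ->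
  2/3 * s1 + 1/3 + hs + (s2 - 1) / 2 + 2/3 * X <= B ->
  Za < s1 + s2 + X + 1 -> Zb < 2 * hs * (s1 + s2 / 2 + X + 1) ->
  Rmin Za Zb <= 32000 / 16947 * B.
Proof.
  intros.
  destruct (Rle_dec Za (32000 / 16947 * B)).
  - apply Rle_trans with Za; [apply Rmin_l | assumption].
  - apply Rle_trans with Zb; [apply Rmin_r|].
    destruct (Rle_dec hs (3/5)); nra.
Qed.

Lemma rates_ge_last (n : nat) (h : nat -> R) :
  (forall j, (1 <= j < n)%nat -> h (S j) <= h j) ->
  forall j, (1 <= j <= n)%nat -> h n <= h j.
Proof.
  intros Hmono j Hj. remember (n - j)%nat as d eqn:Ed.
  revert j Hj Ed. induction d as [|d IH]; intros j Hj Ed.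
  - replace j with n by lia. lra.
  - assert (h (S j) <= h j) by (apply Hmono; lia).
    assert (h n <= h (S j)) by (apply IH; lia). lra.
Qed.

Theorem corollary1 (n : nat) (h : nat -> R)
  (Hn : (1 <= n)%nat)
  (H1 : h 1%nat = 1)
  (Hmono : forall j, (1 <= j < n)%nat -> h (S j) <= h j)
  (Hpos : 0 < h n)
  (sigma : nat -> nat)
  (Hsigma : forall t, (1 <= t)%nat -> (1 <= sigma t <= n)%nat)
  (B : R) (HB : height_bounded_by n h sigma B) :
  H_PW n h <= 32000 / 16947 * B.
Proof.
  assert (Hrates : forall j, (1 <= j <= n)%nat -> 0 < h j).
  { intros j Hj. pose proof (rates_ge_last n h Hmono j Hj). lra. }
  destruct (Nat.eq_dec n 1) as [->|Hn2].
  { assert (Hday1 : height_before h sigma 1 1 <= B) by (apply HB; lia).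
    unfold height_before in Hday1. simpl in Hday1.
    rewrite H_PW_single by assumption. lra. }
  assert (HB2 : 2 * h 1%nat <= B)
    by (apply (height_bound_ge_twice_rate n h sigma B HB 1 2); try lia;
        [lra | apply Hrates; lia]).
  assert (Hsum := sum_rates_le_height_bound n h sigma B Hsigma HB ltac:(lra)).
  assert (Hclass := class_sums_le n h ltac:(intros j Hj; apply Rlt_le, Hrates, Hj)).
  pose proof (sh3_bounds n h). pose proof (sh4_bounds n h).
  pose proof (pi1_ge1 n h Hn H1). pose proof (S1_sum_lower n h Hn H1).
  pose proof (z_a_lt n h).
  destruct (H_PW_cases n h) as [[Hnil ->] | [Hne ->]].
  - rewrite Hnil in *. simpl in *. lra.
  - destruct (hstar_bounds n h Hne) as [Hhs HS2].
    pose proof (z_b_lt n h ltac:(lra)).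
    assert (1 <= INR (length (S2 n h))).
    { destruct (S2 n h); [contradiction|]. simpl length. rewrite S_INR.
      pose proof (pos_INR (length l)). lra. }
    apply (Rmin_le_ratio (pi1 n h) (INR (length (S2 n h))) (sh3 n h + sh4 n h)
             (hstar n h)); lra.
Qed.
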